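(* Let $\mathbb{C}$ be a category of interest and $A\in\mathbb{C}$. The map $d:A\to\mathfrak{B}(A)$, $a\mapsto d(a)$ where $d(a)\cdot a'=a+a'-a$ and $d(a)*a'=a*a'$ for all $a'\in A$, $*\in\Omega_2'$, is a homomorphism in $\mathbb{C}_G$.
   Context: Category of interest. A category of groups with operations is a variety of universal algebras with a set of operations $\Omega=\Omega_0\cup\Omega_1\cup\Omega_2$ ($\Omega_i$ = set of $i$-ary operations) and a set of identities $\mathbb{E}$ such that: $\mathbb{E}$ contains the group laws; the group operations, written additively $0,-,+$ (addition not necessarily commutative), lie in $\Omega_0,\Omega_1,\Omega_2$ respectively, and $\Omega_0=\{0\}$; putting $\Omega_2'=\Omega_2\setminus\{+\}$ and $\Omega_1'=\Omega_1\setminus\{-\}$, whenever $*\in\Omega_2'$ also $*^\circ\in\Omega_2'$, where $x*^\circ y=y*x$; $\mathbb{E}$ contains $x*(y+z)=x*y+x*z$ for each $*\in\Omega_2'$, and $\omega(x+y)=\omega(x)+\omega(y)$, $\omega(x)*y=\omega(x*y)$ for each $\omega\in\Omega_1'$, $*\in\Omega_2'$. A category of interest $\mathbb{C}=(\Omega,\mathbb{E})$ is such a variety which also satisfies: (Axiom 1) $x_1+(x_2*x_3)=(x_2*x_3)+x_1$ for each $*\in\Omega_2'$; (Axiom 2) for each ordered pair $( *,\bar* )\in\Omega_2'\times\Omega_2'$ there is a word $W$ with $(x_1*x_2)\bar*x_3=W\big(x_1(x_2x_3),x_1(x_3x_2),(x_2x_3)x_1,(x_3x_2)x_1,x_2(x_1x_3),x_2(x_3x_1),(x_1x_3)x_2,(x_3x_1)x_2\big)$,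 each juxtaposition standing for some operation in $\Omega_2'$; the right-hand side is denoted $W(x_1,x_2;x_3;*,\bar* )$. Let $\mathbb{E}_G\subseteq\mathbb{E}$ consist of the group laws together with the identities $x*(y+z)=x*y+x*z$, $\omega(x+y)=\omega(x)+\omega(y)$, $\omega(x)*y=\omega(x*y)$, and let $\mathbb{C}_G$ be the variety $(\Omega,\mathbb{E}_G)$. Derived actions. For objects $A,B$ of $\mathbb{C}$, a split extension $0\to A\to E\xrightarrow{p}B\to 0$ in $\mathbb{C}$ ($p$ surjective with kernel $A$, and a morphism $s$ with $ps=1_B$) induces actions $b\cdot a=s(b)+a-s(b)$ and $b*a=s(b)*a$ ($*\in\Omega_2'$); these are the derived actions of $B$ on $A$ in $\mathbb{C}$ (one writes $a*b:=b*^\circ a$). The object $\mathfrak{B}(A)$. Fix $A\in\mathbb{C}$ and let $(B_j)_{j\in J}$ range over all objects of $\mathbb{C}$ equipped with a derived action on $A$ in $\mathbb{C}$ (one index for each split extension of $A$ in $\mathbb{C}$; note $A$ itself acts on $A$ by $a\cdot a'=a+a'-a$, $a*a'=a*a'$). Consider families $x$ of maps $A\to A$ consisting of a map $a\mapsto x\cdot a$ and maps $a\mapsto x*a$ ($*\in\Omega_2'$). For $b\in B_j$ let $\mathbf{b}$ be the family $a\mapsto b\cdot a$, $a\mapsto b*a$, and let $\mathbb{B}$ be the set of all such $\mathbf b$. Operations on families: for $\mathbf{b}_i,\mathbf{b}_k\in\mathbb{B}$ and $*\in\Omega_2'$, $(\mathbf b_i*\mathbf b_k)\cdot a=a$ and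 $(\mathbf b_i*\mathbf b_k)\bar*a=W(b_i,b_k;a;*,\bar* )$ for $\bar*\in\Omega_2'$ (the Axiom 2 word evaluated through the given actions), iterated products being defined inductively in the same way via Axiom 2; $(x+y)\cdot a=x\cdot(y\cdot a)$ and $(x+y)*a=x*a+y*a$; for $\omega\in\Omega_1'$, $\omega(\mathbf b_k)$ is the family of $\omega(b_k)$, $\omega(x*y)=\omega(x)*y$, and $\omega$ is additive; $(-\mathbf b_k)\cdot a=(-b_k)\cdot a$, $(-x)*a=-(x*a)$, $(-x)\cdot a=a$ when $x$ is a product, and $-(x_1+\dots+x_n)=-x_n-\dots-x_1$. $\mathfrak{B}(A)$ is the set of all families obtained from $\mathbb{B}$ by iterating these operations, modulo the equivalence $x\sim y$ iff $x\cdot a=y\cdot a$, $x*a=y*a$ and $(\omega_1\cdots\omega_n x)\cdot a=(\omega_1\cdots\omega_n y)\cdot a$ for all $a\in A$, $*\in\Omega_2'$, $n\ge1$, $\omega_1,\dots,\omega_n\in\Omega_1'$. It is an object of $\mathbb{C}_G$. *)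

From Stdlib Require Import List Bool.
Import ListNotations.
Set Implicit Arguments.
Unset Strict Implicit.

(* ---------- Signature: Omega_1' (unary ops other than -) and Omega_2'
   (binary ops other than +), with the involution * |-> *^o. ---------- *)
Record signature := Signature {
  O1 : Type;
  O2 : Type;
  opp2 : O2 -> O2       (* * |-> *^o, with x *^o y = y * x in E *)
}.

Inductive term (S : signature) : Type :=
| TVar : nat -> term S
| T0 : term S
| TNeg : term S -> term S
| TAdd : term S -> term S -> term S
| TUn : O1 S -> term S -> term S
| TBin : O2 S -> term S -> term S -> term S.
Arguments T0 {S}.

(* The eight patterns of Axiom 2 (x1,x2,x3 = variables 0,1,2):
   P1 x1(x2x3), P2 x1(x3x2), P3 (x2x3)x1, P4 (x3x2)x1,
   P5 x2(x1x3), P6 x2(x3x1), P7 (x1x3)x2, P8 (x3x1)x2. *)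
Inductive pattern := P1 | P2 | P3 | P4 | P5 | P6 | P7 | P8.

(* A word W in the eight terms; each juxtaposition is an operation of Omega_2'
   (o1 = outer juxtaposition, o2 = inner one). *)
Inductive wword (S : signature) : Type :=
| WSlot : pattern -> O2 S -> O2 S -> wword S
| W0 : wword S
| WNeg : wword S -> wword S
| WAdd : wword S -> wword S -> wword S
| WUn : O1 S -> wword S -> wword S.
Arguments W0 {S}.

Definition slot_term (S : signature) (p : pattern) (o1 o2 : O2 S) : term S :=
  let x1 := TVar S 0 in let x2 := TVar S 1 in let x3 := TVar S 2 in
  match p with
  | P1 => TBin o1 x1 (TBin o2 x2 x3)
  | P2 => TBin o1 x1 (TBin o2 x3 x2)
  | P3 => TBin o1 (TBin o2 x2 x3) x1
  | P4 => TBin o1 (TBin o2 x3 x2) x1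
  | P5 => TBin o1 x2 (TBin o2 x1 x3)
  | P6 => TBin o1 x2 (TBin o2 x3 x1)
  | P7 => TBin o1 (TBin o2 x1 x3) x2
  | P8 => TBin o1 (TBin o2 x3 x1) x2
  end.

Fixpoint wword_term (S : signature) (w : wword S) : term S :=
  match w with
  | WSlot p o1 o2 => slot_term p o1 o2
  | W0 => T0
  | WNeg w => TNeg (wword_term w)
  | WAdd w1 w2 => TAdd (wword_term w1) (wword_term w2)
  | WUn u w => TUn u (wword_term w)
  end.

Definition x0 {S} := TVar S 0.
Definition x1 {S} := TVar S 1.
Definition x2 {S} := TVar S 2.

Record cat_interest := CatInterest {
  sig :> signature;
  E : term sig -> term sig -> Prop;
  Wd : O2 sig -> O2 sig -> wword sig;
  E_assoc : E (TAdd x0 (TAdd x1 x2)) (TAdd (TAdd x0 x1) x2);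
  E_zl : E (TAdd T0 x0) x0;
  E_zr : E (TAdd x0 T0) x0;
  E_nl : E (TAdd (TNeg x0) x0) T0;
  E_nr : E (TAdd x0 (TNeg x0)) T0;
  E_opp : forall s, E (TBin (opp2 s) x0 x1) (TBin s x1 x0);
  E_distr : forall s, E (TBin s x0 (TAdd x1 x2)) (TAdd (TBin s x0 x1) (TBin s x0 x2));
  E_unadd : forall w, E (TUn w (TAdd x0 x1)) (TAdd (TUn w x0) (TUn w x1));
  E_unbin : forall w s, E (TBin s (TUn w x0) x1) (TUn w (TBin s x0 x1));
  E_ax1 : forall s, E (TAdd x0 (TBin s x1 x2)) (TAdd (TBin s x1 x2) x0);
  E_ax2 : forall s t, E (TBin t (TBin s x0 x1) x2) (wword_term (Wd s t))
}.

Section Models.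
Variable S : signature.
Variables (X : Type) (z : X) (ng : X -> X) (ad : X -> X -> X)
          (un : O1 S -> X -> X) (bi : O2 S -> X -> X -> X).
Fixpoint teval (v : nat -> X) (t : term S) : X :=
  match t with
  | TVar _ n => v n
  | T0 => z
  | TNeg t => ng (teval v t)
  | TAdd t1 t2 => ad (teval v t1) (teval v t2)
  | TUn w t => un w (teval v t)
  | TBin s t1 t2 => bi s (teval v t1) (teval v t2)
  end.
End Models.

Record model (C : cat_interest) := Model {
  car :> Type;
  mzero : car;
  mneg : car -> car;
  madd : car -> car -> car;
  mun : O1 C -> car -> car;
  mbin : O2 C -> car -> car -> car;
  msat : forall l r, @E C l r -> forall v : nat -> car,
      teval mzero mneg madd mun mbin v l = teval mzero mneg madd mun mbin v r
}.
Arguments mzero {C} m.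
Arguments mneg {C m}.
Arguments madd {C m}.
Arguments mun {C m}.
Arguments mbin {C m}.

Definition is_hom (C : cat_interest) (X Y : model C) (f : X -> Y) : Prop :=
  f (mzero X) = mzero Y /\
  (forall x, f (mneg x) = mneg (f x)) /\
  (forall x y, f (madd x y) = madd (f x) (f y)) /\
  (forall w x, f (mun w x) = mun w (f x)) /\
  (forall s x y, f (mbin s x y) = mbin s (f x) (f y)).

Definition derived_action (C : cat_interest) (A B : model C)
    (dot : B -> A -> A) (star : O2 C -> B -> A -> A) : Prop :=
  exists (Ex : model C) (p : Ex -> B) (s : B -> Ex) (i : A -> Ex),
    is_hom p /\ is_hom s /\ is_hom i /\
    (forall b, exists e, p e = b) /\
    (forall a a', i a = i a' -> a = a') /\
    (forall e, p e = mzero B <-> exists a, i a = e) /\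
    (forall b, p (s b) = b) /\
    (forall b a, i (dot b a) = madd (madd (s b) (i a)) (mneg (s b))) /\
    (forall o b a, i (star o b a) = mbin o (s b) (i a)).

Section BA.
Variables (C : cat_interest) (A : model C).

(* Index set of acting objects: A itself (conjugation action) and every object
   with a derived action on A. *)
Inductive gen : Type :=
| GSelf : gen
| GExt (B : model C) (dot : B -> A -> A) (star : O2 C -> B -> A -> A)
       (H : derived_action dot star) : gen.
Arguments GExt : clear implicits.

Definition gcar (g : gen) : Type :=
  match g with GSelf => car A | GExt B _ _ _ => car B end.

Definition gneg (g : gen) : gcar g -> gcar g :=
  match g as g return gcar g -> gcar g with
  | GSelf => fun b => mneg b
  | GExt B _ _ _ => fun b => mneg b end.

Definition gun (g : gen) : O1 C -> gcar g -> gcar g :=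
  match g as g return O1 C -> gcar g -> gcar g with
  | GSelf => fun w b => mun w b
  | GExt B _ _ _ => fun w b => mun w b end.

Definition gdot (g : gen) : gcar g -> A -> A :=
  match g as g return gcar g -> A -> A with
  | GSelf => fun b a => madd (madd b a) (mneg b)
  | GExt _ dot _ _ => dot end.

Definition gstar (g : gen) : O2 C -> gcar g -> A -> A :=
  match g as g return O2 C -> gcar g -> A -> A with
  | GSelf => fun o b a => mbin o b a
  | GExt _ _ star _ => star end.

Inductive fam : Type :=
| FGen (g : gen) (b : gcar g)
| FZero : fam
| FAdd : fam -> fam -> fam
| FOpp : fam -> fam
| FUn : O1 C -> fam -> fam
| FMul : O2 C -> fam -> fam -> fam.
Arguments FGen : clear implicits.

(* Evaluation of a word W(x,y;a;*,*bar) through the maps of x,y (stars X,Y). *)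
Definition slot_val (X Y : O2 C -> A -> A) (a : A) (p : pattern) (o1 o2 : O2 C) : A :=
  let op := @opp2 C in
  match p with
  | P1 => X o1 (Y o2 a)
  | P2 => X o1 (Y (op o2) a)
  | P3 => X (op o1) (Y o2 a)
  | P4 => X (op o1) (Y (op o2) a)
  | P5 => Y o1 (X o2 a)
  | P6 => Y o1 (X (op o2) a)
  | P7 => Y (op o1) (X o2 a)
  | P8 => Y (op o1) (X (op o2) a)
  end.

Fixpoint weval (X Y : O2 C -> A -> A) (a : A) (w : wword C) : A :=
  match w with
  | WSlot p o1 o2 => slot_val X Y a p o1 o2
  | W0 => mzero A
  | WNeg w => mneg (weval X Y a w)
  | WAdd w1 w2 => madd (weval X Y a w1) (weval X Y a w2)
  | WUn u w => mun u (weval X Y a w)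
  end.

(* sem ws n x = the pair of maps (a |-> y.a, (o,a) |-> y *o a) of the family
   y = (omega_1 ... omega_k) ((-)^n x) where ws = [omega_1;...;omega_k].
   It implements the rules: omega(bold b) = bold(omega b), omega additive,
   omega(x*y) = omega(x)*y; (-bold b) = bold(-b), -(x+y) = -y-x,
   (-x).a = a and (-x)*a = -(x*a) for x a product; (x+y).a = x.(y.a),
   (x+y)*a = x*a + y*a; (x*y).a = a, (x*y)*bar a = W(x,y;a;*,*bar). *)
Fixpoint sem (ws : list (O1 C)) (n : bool) (x : fam) : (A -> A) * (O2 C -> A -> A) :=
  match x with
  | FGen g b =>
      let b1 := fold_right (@gun g) b ws in
      let b2 := if n then @gneg g b1 else b1 in
      (@gdot g b2, fun o a => @gstar g o b2 a)
  | FZero => (fun a => a, fun _ _ => mzero A)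
  | FAdd x y =>
      let u := if n then sem ws n y else sem ws n x in
      let v := if n then sem ws n x else sem ws n y in
      (fun a => fst u (fst v a),
       fun o a => madd (snd u o a) (snd v o a))
  | FOpp x => sem ws (negb n) x
  | FUn w x => sem (ws ++ [w]) n x
  | FMul s x y =>
      let X := snd (sem ws false x) in
      let Y := snd (sem nil false y) in
      (fun a => a,
       fun t a => let r := weval X Y a (@Wd C s t) in if n then mneg r else r)
  end.

Definition fequiv (x y : fam) : Prop :=
  (forall a, fst (sem nil false x) a = fst (sem nil false y) a) /\
  (forall o a, snd (sem nil false x) o a = snd (sem nil false y) o a) /\
  (forall ws, ws <> nil -> forall a, fst (sem ws false x) a = fst (sem ws false y) a).

Definition dmap (a : A) : fam := FGen GSelf a.
End BA.
Arguments FZero {C A}.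

(** A acts on itself by conjugation [a . a' = a + a' - a] and by its own
    operations [a * a' = a *a'], so each clause reduces to an identity of A:
    group laws for [0], [-] and [+], distributivity for [*] acting through a
    sum, compatibility of the unary operations with the others for [omega],
    and, for a product [a * a'], Axiom 1 (products are central, so conjugation
    by [a * a'] is trivial, matching [(x * y) . a' = a']) together with
    Axiom 2 (which is precisely the rule defining [(x * y) *' a'] in B(A)). *)
From Stdlib Require Import List.
Import ListNotations.

Section InnerAction.
Variables (C : cat_interest) (A : model C).

Definition val3 (a b c : A) : nat -> A :=
  fun n => match n with 0 => a | 1 => b | _ => c end.

Lemma addA (x y z : A) : madd x (madd y z) = madd (madd x y) z.
Proof. exact (msat (E_assoc C) (val3 x y z)). Qed.

Lemma add0r (x : A) : madd (mzero A) x = x.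
Proof. exact (msat (E_zl C) (val3 x x x)). Qed.

Lemma addr0 (x : A) : madd x (mzero A) = x.
Proof. exact (msat (E_zr C) (val3 x x x)). Qed.

Lemma addNr (x : A) : madd (mneg x) x = mzero A.
Proof. exact (msat (E_nl C) (val3 x x x)). Qed.

Lemma addrN (x : A) : madd x (mneg x) = mzero A.
Proof. exact (msat (E_nr C) (val3 x x x)). Qed.

Lemma bin_opp2 (s : O2 C) (x y : A) : mbin (opp2 s) x y = mbin s y x.
Proof. exact (msat (E_opp s) (val3 x y x)). Qed.

Lemma binDr (s : O2 C) (x y z : A) :
  mbin s x (madd y z) = madd (mbin s x y) (mbin s x z).
Proof. exact (msat (E_distr s) (val3 x y z)). Qed.

Lemma unD (w : O1 C) (x y : A) : mun w (madd x y) = madd (mun w x) (mun w y).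
Proof. exact (msat (E_unadd w) (val3 x y x)). Qed.

Lemma bin_unl (w : O1 C) (s : O2 C) (x y : A) :
  mbin s (mun w x) y = mun w (mbin s x y).
Proof. exact (msat (E_unbin w s) (val3 x y x)). Qed.

Lemma addC_bin (s : O2 C) (x y z : A) :
  madd x (mbin s y z) = madd (mbin s y z) x.
Proof. exact (msat (E_ax1 s) (val3 x y z)). Qed.

Lemma teval_wword_term (a a' x : A) (w : wword C) :
  teval (mzero A) mneg madd mun mbin (val3 a a' x) (wword_term w) =
  weval (fun o y => mbin o a y) (fun o y => mbin o a' y) x w.
Proof.
  induction w as [p o1 o2| |w IH|w1 IH1 w2 IH2|u w IH]; simpl; try congruence.
  destruct p; simpl; rewrite ?bin_opp2; reflexivity.
Qed.

Lemma bin_ax2 (s t : O2 C) (a a' x : A) :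
  mbin t (mbin s a a') x =
  weval (fun o y => mbin o a y) (fun o y => mbin o a' y) x (Wd s t).
Proof. rewrite <- teval_wword_term. exact (msat (E_ax2 s t) (val3 a a' x)). Qed.

Lemma idem_eq0 (y : A) : madd y y = y -> y = mzero A.
Proof.
  intro Hyy. rewrite <- (addNr y). rewrite <- Hyy at 3.
  rewrite addA, addNr, add0r. reflexivity.
Qed.

Lemma eq_opp (x y : A) : madd x y = mzero A -> y = mneg x.
Proof.
  intro Hxy. rewrite <- (add0r y), <- (addNr x), <- addA, Hxy, addr0. reflexivity.
Qed.

Lemma oppr0 : mneg (mzero A) = mzero A.
Proof. symmetry. apply eq_opp, add0r. Qed.

Lemma opprD (x y : A) : mneg (madd x y) = madd (mneg y) (mneg x).
Proof.
  symmetry. apply eq_opp.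
  rewrite <- addA, (addA y), addrN, add0r, addrN. reflexivity.
Qed.

Lemma un0 (w : O1 C) : mun w (mzero A) = mzero A.
Proof. apply idem_eq0. rewrite <- unD, add0r. reflexivity. Qed.

Lemma unN (w : O1 C) (x : A) : mun w (mneg x) = mneg (mun w x).
Proof. apply eq_opp. rewrite <- unD, addrN, un0. reflexivity. Qed.

Lemma binr0 (s : O2 C) (x : A) : mbin s x (mzero A) = mzero A.
Proof. apply idem_eq0. rewrite <- binDr, add0r. reflexivity. Qed.

Lemma bin0r (s : O2 C) (x : A) : mbin s (mzero A) x = mzero A.
Proof. rewrite <- bin_opp2. apply binr0. Qed.

Lemma binDl (s : O2 C) (x y z : A) :
  mbin s (madd y z) x = madd (mbin s y x) (mbin s z x).
Proof. rewrite <- !(bin_opp2 s x). apply binDr. Qed.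

Lemma conj_bin (s : O2 C) (x y z : A) :
  madd (madd (mbin s y z) x) (mneg (mbin s y z)) = x.
Proof. rewrite <- addC_bin, <- addA, addrN, addr0. reflexivity. Qed.

Local Notation un_list ws a := (fold_right (fun w (b : A) => mun w b) a ws).

Lemma un_list0 (ws : list (O1 C)) : un_list ws (mzero A) = mzero A.
Proof. induction ws as [|w ws IH]; simpl; [|rewrite IH, un0]; reflexivity. Qed.

Lemma un_listN (ws : list (O1 C)) (a : A) :
  un_list ws (mneg a) = mneg (un_list ws a).
Proof. induction ws as [|w ws IH]; simpl; [|rewrite IH, unN]; reflexivity. Qed.

Lemma un_listD (ws : list (O1 C)) (a a' : A) :
  un_list ws (madd a a') = madd (un_list ws a) (un_list ws a').
Proof. induction ws as [|w ws IH]; simpl; [|rewrite IH, unD]; reflexivity. Qed.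

Lemma un_list_rcons (ws : list (O1 C)) (w : O1 C) (a : A) :
  un_list (ws ++ [w]) a = un_list ws (mun w a).
Proof. induction ws as [|w' ws IH]; simpl; [|rewrite IH]; reflexivity. Qed.

Lemma un_list_binl (ws : list (O1 C)) (s : O2 C) (a a' : A) :
  un_list ws (mbin s a a') = mbin s (un_list ws a) a'.
Proof. induction ws as [|w ws IH]; simpl; [|rewrite IH, bin_unl]; reflexivity. Qed.

Lemma dmap0 : fequiv (dmap (mzero A)) FZero.
Proof.
  unfold fequiv, dmap; simpl. split; [|split].
  - intro x. rewrite oppr0, add0r, addr0. reflexivity.
  - intros s x. apply bin0r.
  - intros ws _ x. rewrite un_list0, oppr0, add0r, addr0. reflexivity.
Qed.

Lemma dmapN (a : A) : fequiv (dmap (mneg a)) (FOpp (dmap a)).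
Proof.
  unfold fequiv, dmap; simpl. split; [|split]; try reflexivity.
  intros ws _ x. rewrite un_listN. reflexivity.
Qed.

Lemma dmapD (a a' : A) : fequiv (dmap (madd a a')) (FAdd (dmap a) (dmap a')).
Proof.
  unfold fequiv, dmap; simpl. split; [|split].
  - intro x. rewrite opprD, <- !addA. reflexivity.
  - intros s x. apply binDl.
  - intros ws _ x. rewrite un_listD, opprD, <- !addA. reflexivity.
Qed.

Lemma dmap_un (w : O1 C) (a : A) : fequiv (dmap (mun w a)) (FUn w (dmap a)).
Proof.
  unfold fequiv, dmap; simpl. split; [|split]; try reflexivity.
  intros ws _ x. rewrite un_list_rcons. reflexivity.
Qed.

Lemma dmap_bin (s : O2 C) (a a' : A) :
  fequiv (dmap (mbin s a a')) (FMul s (dmap a) (dmap a')).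
Proof.
  unfold fequiv, dmap; simpl. split; [|split].
  - intro x. apply conj_bin.
  - intros t x. apply bin_ax2.
  - intros ws _ x. rewrite un_list_binl. apply conj_bin.
Qed.

End InnerAction.

Theorem lemma3p3 (C : cat_interest) (A : model C) :
  fequiv (dmap (mzero A)) (@FZero C A) /\
  (forall a : A, fequiv (dmap (mneg a)) (FOpp (dmap a))) /\
  (forall a a' : A, fequiv (dmap (madd a a')) (FAdd (dmap a) (dmap a'))) /\
  (forall (w : O1 C) (a : A), fequiv (dmap (mun w a)) (FUn w (dmap a))) /\
  (forall (s : O2 C) (a a' : A),
      fequiv (dmap (mbin s a a')) (FMul s (dmap a) (dmap a'))).
Proof.
  split; [apply dmap0|].
  split; [apply dmapN|].
  split; [apply dmapD|].
  split; [apply dmap_un | apply dmap_bin].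
Qed.
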